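(* Let $T(t)$ and $S(t)$ be strongly continuous semigroups on Banach spaces $X$ and $Y$, respectively, and assume that $T(t)$ satisfies the recurrent hypercyclicity criterion. Let $\alpha$ be a uniform crossnorm on the algebraic tensor product $X\otimes Y$, and let $X\tilde{\otimes}_\alpha Y$ denote the completion of $(X\otimes Y,\alpha)$. (a) If $S(t)$ satisfies the hypercyclicity criterion, then the semigroup $T(t)\otimes S(t)$ on $X\tilde{\otimes}_\alpha Y$ satisfies the hypercyclicity criterion. (b) If $S(t)$ satisfies the recurrent hypercyclicity criterion, then the semigroup $T(t)\otimes S(t)$ on $X\tilde{\otimes}_\alpha Y$ satisfies the recurrent hypercyclicity criterion.
   Context: A uniform crossnorm on $X\otimes Y$ is a reasonable crossnorm $\alpha$ (in particular $\alpha(x\otimes y)=\|x\|_X\|y\|_Y$ for $x\in X,y\in Y$) such that for all bounded operators $A$ on $X$ and $B$ on $Y$ the operator $A\otimes B$ is bounded on $(X\otimes Y,\alpha)$ with norm at most $\|A\|\|B\|$. The operator $T(t)\otimes S(t)$ is defined on elementary tensors by $x\otimes y\mapsto T(t)x\otimes S(t)y$ and extended uniquely by continuity to $X\tilde{\otimes}_\alpha Y$; this gives a strongly continuous semigroup. A strongly continuous semigroup $R(t)$ on a (separable) Banach space $Z$ satisfies the hypercyclicity criterion if for all non-empty open subsets $U,V,W\subset Z$ with $0\in W$ there exists $t>0$ with $R(t)U\cap W\neq\emptyset$ and $R(t)W\cap V\neq\emptyset$. It satisfies the recurrent hypercyclicity criterion if for all non-empty open subsets $U,V,W\subset Z$ with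 $0\in W$ there exists a constant $L\geq 0$ such that every interval $[t,t+L]$ ($t\ge 0$) contains some $s$ with $R(s)U\cap W\neq\emptyset$ and $R(s)W\cap V\neq\emptyset$. *)

From mathcomp Require Import all_boot all_order all_algebra all_classical all_reals all_analysis.
From mathcomp Require Export complex.
Import numFieldNormedType.Exports.
Set Implicit Arguments. Unset Strict Implicit. Unset Printing Implicit Defensive.
Import Order.TTheory GRing.Theory Num.Theory.
Local Open Scope classical_set_scope.
Local Open Scope ring_scope.

Definition is_linear (K : numFieldType) (U V : normedModType K) (f : U -> V) :=
  forall (a : K) (u v : U), f (a *: u + v) = a *: f u + f v.

Definition bounded_op (K : numFieldType) (U V : normedModType K) (f : U -> V) :=
  is_linear f /\ continuous f.

Definition op_norm_le (K : numFieldType) (U V : normedModType K) (f : U -> V) (c : K) :=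
  forall u, `|f u| <= c * `|u|.

(* strongly continuous (C_0) semigroup, indexed by t >= 0 (values at t < 0 are irrelevant) *)
Definition C0_semigroup (R : realType) (X : normedModType R[i]) (T : R -> X -> X) :=
  [/\ (forall t, 0 <= t -> bounded_op (T t)),
      (forall x, T 0 x = x),
      (forall s t x, 0 <= s -> 0 <= t -> T (s + t) x = T s (T t x)) &
      (forall x, {within [set t : R | 0 <= t], continuous (fun t => T t x)})].

Definition hc_criterion (R : realType) (Z : normedModType R[i]) (Rs : R -> Z -> Z) :=
  forall U V W : set Z, open U -> open V -> open W ->
    U !=set0 -> V !=set0 -> W 0 ->
    exists t : R, 0 < t /\ ((Rs t @` U) `&` W) !=set0 /\ ((Rs t @` W) `&` V) !=set0.

Definition recurrent_hc_criterion (R : realType) (Z : normedModType R[i]) (Rs : R -> Z -> Z) :=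
  forall U V W : set Z, open U -> open V -> open W ->
    U !=set0 -> V !=set0 -> W 0 ->
    exists L : R, 0 <= L /\ forall t : R, 0 <= t ->
      exists s : R, t <= s <= t + L /\
        ((Rs s @` U) `&` W) !=set0 /\ ((Rs s @` W) `&` V) !=set0.

Definition tensor_span (K : numFieldType) (X Y Z : normedModType K) (tens : X -> Y -> Z) : set Z :=
  [set z | exists (n : nat) (xs : 'I_n -> X) (ys : 'I_n -> Y),
             z = \sum_(k < n) tens (xs k) (ys k)].

(* Z, together with tens : X -> Y -> Z (x,y) |-> x (x) y, is the completion
   X ~(x)_alpha Y of the algebraic tensor product X (x) Y (identified with
   tensor_span tens) with respect to a uniform (reasonable) crossnorm alpha,
   alpha being the restriction of the norm of Z. *)
Definition uniform_crossnorm_completion (R : realType) (X Y Z : normedModType R[i])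
    (tens : X -> Y -> Z) :=
  [/\
      (forall (a : R[i]) x x' y, tens (a *: x + x') y = a *: tens x y + tens x' y) /\
      (forall (a : R[i]) x y y', tens x (a *: y + y') = a *: tens x y + tens x y'),
      (forall x y, `|tens x y| = `|x| * `|y|),
      (* reasonable: f (x) g is bounded with dual norm <= |f| |g| *)
      (forall (f : X -> R[i]^o) (g : Y -> R[i]^o), bounded_op f -> bounded_op g ->
         exists phi : Z -> R[i]^o, bounded_op phi /\
           (forall x y, phi (tens x y) = f x * g y) /\
           (forall a b : R[i], 0 <= a -> 0 <= b -> op_norm_le f a -> op_norm_le g b ->
              op_norm_le phi (a * b))),
      (* uniform: A (x) B is bounded with norm <= |A| |B| *)
      (forall (A : X -> X) (B : Y -> Y), bounded_op A -> bounded_op B ->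
         exists C : Z -> Z, bounded_op C /\
           (forall x y, C (tens x y) = tens (A x) (B y)) /\
           (forall a b : R[i], 0 <= a -> 0 <= b -> op_norm_le A a -> op_norm_le B b ->
              op_norm_le C (a * b))) &
      closure (tensor_span tens) = setT].

(* Elementary tensors are dense, so nonempty open sets of the completion contain finite
   sums \sum_k x_k (x) y_k. As T and S are topologically transitive, one orbit of T
   approximates all the x_k, and one orbit of S all the y_k, at suitable times. This pulls
   a triple U, V, W of the criterion for T (x) S back to triples in X and in Y such that
   the criterion for T (x) S holds at every time s at which both pulled-back criteria hold.
   The recurrent criterion for T provides such times s in every window [t, t + L], and the
   uniform boundedness of S on [0, L] (Baire) lets the criterion for S at a time t, for
   suitably shrunken sets, persist on the whole window [t, t + L]. *)

From mathcomp Require Import all_boot all_order all_algebra all_classical all_reals all_analysis.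
From mathcomp Require Import complex ring lra.
Import numFieldNormedType.Exports.
Import Order.TTheory GRing.Theory Num.Theory.
Set Implicit Arguments. Unset Strict Implicit. Unset Printing Implicit Defensive.
Local Open Scope classical_set_scope.
Local Open Scope ring_scope.
Local Open Scope complex_scope.

Section RealNorm.
Variable R : realType.
Implicit Types (V W : normedModType R[i]).

(* The norm of an [R[i]]-normed module is complex valued; its real part [rnorm] carries
   the same information and is amenable to [lra] and [nra]. *)
Definition rnorm V (x : V) : R := complex.Re `|x|.

Lemma rnormE V (x : V) : `|x| = (rnorm x)%:C.
Proof. by rewrite /rnorm RRe_real // normr_real. Qed.

Lemma rnorm_ge0 V (x : V) : 0 <= rnorm x.
Proof. by rewrite -ler0c -rnormE. Qed.

Lemma rnormD V (x y : V) : rnorm (x + y) <= rnorm x + rnorm y.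
Proof. by rewrite -lecR rmorphD /= -!rnormE ler_normD. Qed.

Lemma rnormN V (x : V) : rnorm (- x) = rnorm x.
Proof. by rewrite /rnorm normrN. Qed.

Lemma rnorm0 V : rnorm (0 : V) = 0.
Proof. by rewrite /rnorm normr0. Qed.

Lemma rnorm0_eq0 V (x : V) : rnorm x = 0 -> x = 0.
Proof. by move=> x0; apply/normr0_eq0; rewrite rnormE x0. Qed.

Lemma rnorm_sum V n (g : nat -> V) : rnorm (\sum_(k < n) g k) <= \sum_(k < n) rnorm (g k).
Proof.
elim: n => [|n IH]; first by rewrite !big_ord0 rnorm0.
by rewrite !big_ord_recr /=; apply: (le_trans (rnormD _ _)); apply: lerD.
Qed.

Lemma rdistC V (x y : V) : rnorm (x - y) = rnorm (y - x).
Proof. by rewrite /rnorm distrC. Qed.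

Lemma rdist_triangle V (x y z : V) : rnorm (x - z) <= rnorm (x - y) + rnorm (y - z).
Proof. by have := rnormD (x - y) (y - z); rewrite addrA subrK. Qed.

Lemma rnormZ V (c : R) (x : V) : rnorm (c%:C *: x) = `|c| * rnorm x.
Proof.
apply: complexI; rewrite -rnormE normrZ rnormE rmorphM /=; congr (_ * _).
case: (lerP 0 c) => c0; first by rewrite !ger0_norm ?ler0c.
by rewrite !ltr0_norm ?rmorphN // ltcR.
Qed.

Lemma ball_rnorm V (x y : V) (e : R) : ball x e%:C y <-> rnorm (x - y) < e.
Proof. by rewrite -ball_normE /= rnormE ltcR. Qed.

Lemma nbhs_rnorm V (A : set V) x : nbhs x A ->
  exists2 r : R, 0 < r & forall y, rnorm (x - y) < r -> A y.
Proof.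
move=> /nbhs_ballP [e e0 eA]; have er : e \is Num.real by exact: gtr0_real.
exists (complex.Re e); first by rewrite -ltcR RRe_real.
by move=> y xy; apply: eA; rewrite -(RRe_real er) ball_rnorm.
Qed.

Lemma open_rnormP V (A : set V) : open A <->
  forall x, A x -> exists2 r : R, 0 < r & forall y, rnorm (x - y) < r -> A y.
Proof.
split=> [oA x Ax|rA]; first by apply: nbhs_rnorm; apply: open_nbhs_nbhs.
rewrite openE => x /rA [r r0 rA']; apply/nbhs_ballP; exists r%:C.
  by rewrite /= ltcR.
by move=> y /ball_rnorm; apply: rA'.
Qed.

Lemma open_rball V (z : V) (r : R) : open [set y | rnorm (z - y) < r].
Proof.
apply/open_rnormP => y /= zy; exists (r - rnorm (z - y)) => [|y' yy']; first lra.
by have := rdist_triangle z y y'; lra.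
Qed.

Lemma continuous_rnorm V W (f : V -> W) p : {for p, continuous f} ->
  forall e : R, 0 < e ->
  exists2 d : R, 0 < d & forall p', rnorm (p - p') < d -> rnorm (f p - f p') < e.
Proof.
move=> fp e e0.
have /fp /nbhs_rnorm [d d0 fd] : nbhs (f p) (ball (f p) e%:C).
  by apply: nbhsx_ballx; rewrite ltcR.
by exists d => // p' /fd /ball_rnorm.
Qed.

Lemma open_preimage_rball V W (f : V -> W) (z : W) (d : R) : continuous f ->
  open [set p | rnorm (f p - z) < d].
Proof.
move=> fc; apply/open_rnormP => p /= fpz.
have [|e e0 fe] := @continuous_rnorm _ _ _ _ (fc p) (d - rnorm (f p - z)); first lra.
exists e => // p' /fe fpp'; have := rdist_triangle (f p') (f p) z.
by rewrite (rdistC (f p') (f p)); lra.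
Qed.

Lemma open_preimage_rballs V W (f : nat -> V -> W) (z : nat -> W) (d : R) n :
  (forall k, continuous (f k)) ->
  open [set p | forall k, (k < n)%N -> rnorm (f k p - z k) < d].
Proof.
move=> fc; elim: n => [|n IH].
  rewrite (_ : [set p | _] = setT); first exact: openT.
  by apply/seteqP; split => // p _ [].
rewrite (_ : [set p | _] = [set p | forall k, (k < n)%N -> rnorm (f k p - z k) < d]
   `&` [set p | rnorm (f n p - z n) < d]); first exact/openI/open_preimage_rball.
apply/seteqP; split => p /=.
  by move=> fp; split => [k kn|]; apply: fp => //; exact: ltnW.
by move=> [fp fnp] k; rewrite ltnS leq_eqVlt => /predU1P [->|/fp].
Qed.

End RealNorm.

Section LinearMaps.
Variables (R : realType) (V W : normedModType R[i]) (f : V -> W).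
Hypothesis f_lin : is_linear f.

Lemma linD x y : f (x + y) = f x + f y.
Proof. by have := f_lin 1 x y; rewrite !scale1r. Qed.

Lemma lin0 : f 0 = 0.
Proof. by apply/(addrI (f 0)); rewrite -linD !addr0. Qed.

Lemma linZ a x : f (a *: x) = a *: f x.
Proof. by rewrite -[a *: x]addr0 f_lin lin0 addr0. Qed.

Lemma linB x y : f (x - y) = f x - f y.
Proof. by rewrite linD -scaleN1r linZ scaleN1r. Qed.

Lemma lin_sum n (g : nat -> V) : f (\sum_(k < n) g k) = \sum_(k < n) f (g k).
Proof.
elim: n => [|n IH]; first by rewrite !big_ord0 lin0.
by rewrite !big_ord_recr /= linD IH.
Qed.

End LinearMaps.

Section C0Semigroup.
Variables (R : realType) (V : normedModType R[i]) (T : R -> V -> V).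
Hypothesis hT : C0_semigroup T.

Lemma C0_linear t : 0 <= t -> is_linear (T t).
Proof. by case: hT => + _ _ _ => /[apply] -[]. Qed.

Lemma C0_continuous t : 0 <= t -> continuous (T t).
Proof. by case: hT => + _ _ _ => /[apply] -[]. Qed.

Lemma C0_0 t : 0 <= t -> T t 0 = 0.
Proof. by move=> t0; apply/lin0/C0_linear. Qed.

Lemma C0D s t x : 0 <= s -> 0 <= t -> T (s + t) x = T s (T t x).
Proof. by case: hT => _ _ + _; apply. Qed.

Lemma C0C s t x : 0 <= s -> 0 <= t -> T s (T t x) = T t (T s x).
Proof. by move=> s0 t0; rewrite -!C0D // addrC. Qed.

End C0Semigroup.

Section TensorEstimates.
Variables (R : realType) (X Y Z : normedModType R[i]) (tens : X -> Y -> Z).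
Hypothesis htens : uniform_crossnorm_completion tens.

Lemma rnorm_tens x y : rnorm (tens x y) = rnorm x * rnorm y.
Proof.
by apply: complexI; case: htens => _ tn _ _ _; rewrite -rnormE tn !rnormE rmorphM.
Qed.

Lemma tens0l y : tens 0 y = 0.
Proof. by apply: rnorm0_eq0; rewrite rnorm_tens rnorm0 mul0r. Qed.

Lemma tensBl x x' y : tens (x - x') y = tens x y - tens x' y.
Proof.
by case: htens => -[+ _] _ _ _ _; rewrite addrC -scaleN1r => ->; rewrite scaleN1r addrC.
Qed.

Lemma tensBr x y y' : tens x (y - y') = tens x y - tens x y'.
Proof.
by case: htens => -[_ +] _ _ _ _; rewrite addrC -scaleN1r => ->; rewrite scaleN1r addrC.
Qed.

Lemma rdist_tens p q x y :
  rnorm (tens p q - tens x y) <= rnorm (p - x) * rnorm q + rnorm x * rnorm (q - y).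
Proof.
have -> : tens p q - tens x y = tens (p - x) q + tens x (q - y).
  by rewrite tensBl tensBr addrA subrK.
by apply: (le_trans (rnormD _ _)); rewrite !rnorm_tens.
Qed.

Lemma rdist_tens_sum n (x : nat -> X) (y : nat -> Y) (e : R) : 0 < e ->
  exists2 d : R, 0 < d & forall p q,
    (forall k, (k < n)%N -> rnorm (p k - x k) < d /\ rnorm (q k - y k) < d) ->
  rnorm (\sum_(k < n) tens (p k) (q k) - \sum_(k < n) tens (x k) (y k)) < e.
Proof.
move=> e0; pose K := \sum_(k < n) (rnorm (x k) + rnorm (y k) + 1).
have K0 : 0 <= K by apply: sumr_ge0 => k _; rewrite !addr_ge0 ?rnorm_ge0.
pose d := Num.min 1 (e / (K + 1)).
have d0 : 0 < d by rewrite lt_min ltr01 divr_gt0 //; lra.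
have d1 : d <= 1 by rewrite ge_min lexx.
have dK : d * (K + 1) <= e by rewrite -ler_pdivlMr ?ge_min ?lexx ?orbT //; lra.
exists d => // p q pq; rewrite -sumrB.
apply: (le_lt_trans (rnorm_sum n (fun k => tens (p k) (q k) - tens (x k) (y k)))).
suff : \sum_(k < n) rnorm (tens (p k) (q k) - tens (x k) (y k)) <= d * K by nra.
rewrite mulr_sumr; apply: ler_sum => k _; have [px qy] := pq k (ltn_ord k).
apply: (le_trans (rdist_tens _ _ _ _)).
have := rdist_triangle (q k) (y k) 0; rewrite !subr0 => qky.
have := rnorm_ge0 (p k - x k); have := rnorm_ge0 (q k - y k).
have := rnorm_ge0 (x k); have := rnorm_ge0 (y k); have := rnorm_ge0 (q k); nra.
Qed.

End TensorEstimates.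

Section HcCriterion.
Variables (R : realType) (V : normedModType R[i]).
Implicit Types (T : R -> V -> V) (U W O : set V).

Definition hc_triple U O W := [/\ open U, U !=set0, open O, O !=set0 & open_nbhs 0 W].

Definition hc_at T U O W (t : R) :=
  ((T t @` U) `&` W) !=set0 /\ ((T t @` W) `&` O) !=set0.

Lemma hc_criterionP T : hc_criterion T <->
  forall U O W, hc_triple U O W -> exists2 t, 0 < t & hc_at T U O W t.
Proof.
split=> [hc U O W [oU U0 oO O0 [oW W0]]|hc U O W oU oO oW U0 O0 W0].
  by have [t [t0 ht]] := hc U O W oU oO oW U0 O0 W0; exists t.
by have [|t t0 ht] := hc U O W; last exists t.
Qed.

Lemma recurrent_hc_criterionP T : recurrent_hc_criterion T <->
  forall U O W, hc_triple U O W ->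
    exists2 L, 0 <= L & forall t, 0 <= t -> exists2 s, t <= s <= t + L & hc_at T U O W s.
Proof.
split=> [hc U O W [oU U0 oO O0 [oW W0]]|hc U O W oU oO oW U0 O0 W0].
  have [L [L0 hL]] := hc U O W oU oO oW U0 O0 W0; exists L => // t /hL [s [ts hs]].
  by exists s.
have [|L L0 hL] := hc U O W; first by split.
by exists L; split => // t /hL [s ts hs]; exists s.
Qed.

Lemma recurrent_hc_criterion_hc T : recurrent_hc_criterion T -> hc_criterion T.
Proof.
move=> /recurrent_hc_criterionP rhc; apply/hc_criterionP => U O W /rhc [L L0 hL].
by have [s /andP [s1 _] hs] := hL 1 ler01; exists s => //; apply: lt_le_trans s1.
Qed.

Definition topologically_transitive T := forall A B : set V,
  open A -> open B -> A !=set0 -> B !=set0 -> exists2 t, 0 < t & exists2 a, A a & B (T t a).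

Variable T : R -> V -> V.
Hypothesis hT : C0_semigroup T.

(* Approximate [a] by [u + w] with [T t u] small and [w] small, [T t w] close to [b]. *)
Lemma hc_transitive : hc_criterion T -> topologically_transitive T.
Proof.
move=> hc A B oA oB [a Aa] [b Bb].
have [ra ra0 raA] := (open_rnormP A).1 oA a Aa.
have [rb rb0 rbB] := (open_rnormP B).1 oB b Bb.
pose r := Num.min ra rb; have r0 : 0 < r by rewrite lt_min ra0.
have [rra rrb] : r <= ra /\ r <= rb by rewrite !ge_min !lexx orbT.
have ctr (z : V) : [set y | rnorm (z - y) < r / 2] z by rewrite /= subrr rnorm0; lra.
have [t [t0 [[_ [[u /= au <-] Tu]] [_ [[w /= w0 <-] bTw]]]]] :=
  hc _ _ _ (open_rball a (r / 2)) (open_rball b (r / 2)) (open_rball 0 (r / 2))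
    (ex_intro _ a (ctr a)) (ex_intro _ b (ctr b)) (ctr 0).
rewrite /= sub0r rnormN in w0; rewrite /= sub0r rnormN in Tu; rewrite /= in au bTw.
exists t => //; exists (u + w).
  have uw : rnorm (u - (u + w)) = rnorm w by rewrite opprD addrA subrr sub0r rnormN.
  by apply: raA; have := rdist_triangle a u (u + w); lra.
apply: rbB; rewrite (linD (C0_linear hT (ltW t0))).
have uw : rnorm (T t w - (T t u + T t w)) = rnorm (T t u).
  by rewrite opprD addrCA subrr addr0 rnormN.
by have := rdist_triangle b (T t w) (T t u + T t w); lra.
Qed.

Definition orbit_near (j : nat -> R) (x : nat -> V) (d : R) n :=
  [set p | forall k, (k < n)%N -> rnorm (T (j k) p - x k) < d].

Lemma open_orbit_near j x d n : (forall k, 0 <= j k) -> open (orbit_near j x d n).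
Proof. by move=> j0; apply: open_preimage_rballs => k; apply: C0_continuous. Qed.

Lemma orbit_near0 j d n : (forall k, 0 <= j k) -> 0 < d -> orbit_near j (fun=> 0) d n 0.
Proof. by move=> j0 d0 k _; rewrite C0_0 // subrr rnorm0. Qed.

(* The targets are added one at a time: transitivity moves a point of the open set
   [orbit_near j x d n] close to [x n]. *)
Lemma transitive_orbit_near : topologically_transitive T -> forall n x d, 0 < d ->
  exists2 j, (forall k, 0 <= j k) & orbit_near j x d n !=set0.
Proof.
move=> tr; elim=> [|n IH] x d d0; first by exists (fun=> 0) => //; exists 0.
have [j j0 [a ja]] := IH x d d0.
have [||t t0 [a' ja' Ta']] := tr _ _ (open_orbit_near x d n j0) (open_rball (x n) d).
- by exists a.
- by exists (x n); rewrite /= subrr rnorm0.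
exists (fun k => if k == n then t else j k) => [k|]; first by case: ifP => _ //; lra.
exists a' => k; rewrite ltnS leq_eqVlt => /predU1P [->|kn]; first by rewrite eqxx rdistC.
by rewrite ifN ?ja' // neq_ltn kn.
Qed.

End HcCriterion.

Section TensorReduction.
Variables (R : realType) (X Y Z : normedModType R[i]).
Variables (T : R -> X -> X) (S : R -> Y -> Y) (tens : X -> Y -> Z) (TS : R -> Z -> Z).
Hypotheses (hT : C0_semigroup T) (hS : C0_semigroup S).
Hypothesis htens : uniform_crossnorm_completion tens.
Hypothesis hTS : forall t, 0 <= t -> bounded_op (TS t) /\
  forall x y, TS t (tens x y) = tens (T t x) (S t y).

Lemma open_tensor_sum (U : set Z) : open U -> U !=set0 ->
  exists n (x : nat -> X) (y : nat -> Y), U (\sum_(k < n) tens (x k) (y k)).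
Proof.
move=> oU [u Uu]; have : closure (tensor_span tens) u by case: htens => _ _ _ _ ->.
move=> /(_ U (open_nbhs_nbhs (conj oU Uu))) [_ [[n [x [y ->]]] Ut]].
exists n, (fun k => if insub k is Some i then x i else 0),
  (fun k => if insub k is Some i then y i else 0).
by under eq_bigr => i _ do rewrite valK.
Qed.

Lemma tensor_sum0 n : \sum_(k < n) tens ((fun=> 0) k) ((fun=> 0) k) = 0.
Proof. by rewrite big1 // => k _; rewrite tens0l. Qed.

Lemma TS_tensor_sum s n p q (j i : nat -> R) : 0 <= s ->
  (forall k, 0 <= j k) -> (forall k, 0 <= i k) ->
  TS s (\sum_(k < n) tens (T (j k) p) (S (i k) q)) =
  \sum_(k < n) tens (T (j k) (T s p)) (S (i k) (S s q)).
Proof.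
move=> s0 j0 i0; have [[TSlin _] TStens] := hTS s0.
rewrite (lin_sum TSlin n (fun k => tens (T (j k) p) (S (i k) q))).
by apply: eq_bigr => k _; rewrite TStens (C0C hT _ s0 (j0 k)) (C0C hS _ s0 (i0 k)).
Qed.

Lemma tensor_sum_near (U : set Z) n (x : nat -> X) (y : nat -> Y) :
  open U -> U (\sum_(k < n) tens (x k) (y k)) ->
  exists2 d : R, 0 < d & forall (j i : nat -> R) p q,
    orbit_near T j x d n p -> orbit_near S i y d n q ->
    U (\sum_(k < n) tens (T (j k) p) (S (i k) q)).
Proof.
move=> oU Ut; have [r r0 rU] := (open_rnormP U).1 oU _ Ut.
have [d d0 dr] := rdist_tens_sum htens n x y r0.
exists d => // j i p q jp iq; apply: rU; rewrite rdistC.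
apply: (dr (fun k => T (j k) p) (fun k => S (i k) q)) => k kn.
by split; [apply: jp | apply: iq].
Qed.

Lemma hc_triple_tensor (U V W : set Z) :
  topologically_transitive T -> topologically_transitive S -> hc_triple U V W ->
  exists (A C WX : set X) (B D WY : set Y),
  [/\ hc_triple A C WX, hc_triple B D WY &
    forall s, 0 <= s -> hc_at T A C WX s -> hc_at S B D WY s -> hc_at TS U V W s].
Proof.
move=> trT trS [oU U0 oV V0 [oW W0]].
have [n [x [y Ut]]] := open_tensor_sum oU U0.
have [m [x' [y' Vt]]] := open_tensor_sum oV V0.
have Wt k : W (\sum_(i < k) tens ((fun=> 0) i) ((fun=> 0) i)) by rewrite tensor_sum0.
have [d1 d10 d1U] := tensor_sum_near oU Ut.
have [d2 d20 d2W] := tensor_sum_near (x := fun=> 0) (y := fun=> 0) oW (Wt n).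
have [d3 d30 d3V] := tensor_sum_near oV Vt.
have [d4 d40 d4W] := tensor_sum_near (x := fun=> 0) (y := fun=> 0) oW (Wt m).
have [j j0 Aj] := transitive_orbit_near hT trT n x d10.
have [i i0 Bi] := transitive_orbit_near hS trS n y d10.
have [j' j'0 Cj] := transitive_orbit_near hT trT m x' d30.
have [i' i'0 Di] := transitive_orbit_near hS trS m y' d30.
exists (orbit_near T j x d1 n), (orbit_near T j' x' d3 m),
  (orbit_near T j (fun=> 0) d2 n `&` orbit_near T j' (fun=> 0) d4 m),
  (orbit_near S i y d1 n), (orbit_near S i' y' d3 m),
  (orbit_near S i (fun=> 0) d2 n `&` orbit_near S i' (fun=> 0) d4 m).
split.
- split => //; try exact: open_orbit_near.
  by split; [apply: openI; exact: open_orbit_near | split; exact: orbit_near0].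
- split => //; try exact: open_orbit_near.
  by split; [apply: openI; exact: open_orbit_near | split; exact: orbit_near0].
move=> s s0 [[_ [[a Aa <-] [WTa _]]] [_ [[c [_ Wc] <-] CTc]]]
  [[_ [[b Bb <-] [WSb _]]] [_ [[e [_ We] <-] DSe]]].
split.
- exists (TS s (\sum_(k < n) tens (T (j k) a) (S (i k) b))).
  split; first by exists (\sum_(k < n) tens (T (j k) a) (S (i k) b)); first exact: d1U.
  by rewrite TS_tensor_sum //; apply: d2W.
- exists (TS s (\sum_(k < m) tens (T (j' k) c) (S (i' k) e))).
  split; first by exists (\sum_(k < m) tens (T (j' k) c) (S (i' k) e)); first exact: d4W.
  by rewrite TS_tensor_sum //; apply: d3V.
Qed.

End TensorReduction.

Section Baire.
Variables (R : realType) (X : completeNormedModType R[i]) (F : nat -> set X).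
Hypothesis F_closed : forall k, closed (F k).

Let nowhere_dense k := forall x (r : R), 0 < r -> exists2 y, rnorm (x - y) < r & ~ F k y.

Lemma Baire_step k x (r : R) : nowhere_dense k -> 0 < r ->
  exists q : X * R, [/\ 0 < q.2, q.2 <= k.+2%:R^-1 &
    forall z, rnorm (q.1 - z) < 2 * q.2 -> rnorm (x - z) < r /\ ~ F k z].
Proof.
move=> ndk r0; have [y xy nFy] := ndk x r r0.
have [e e0 eF] := (open_rnormP _).1 (closed_openC (@F_closed k)) y nFy.
pose r' := Num.min (Num.min (e / 2) ((r - rnorm (x - y)) / 2)) k.+2%:R^-1.
have k0 : 0 < k.+2%:R^-1 :> R by rewrite invr_gt0 ltr0n.
have r'0 : 0 < r' by rewrite !lt_min k0 andbT; apply/andP; split; lra.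
have [r'e r'r] : r' <= e / 2 /\ r' <= (r - rnorm (x - y)) / 2.
  by rewrite !ge_min !lexx !orbT.
exists (y, r'); split => //=; first by rewrite ge_min lexx orbT.
move=> z yz; split; last by apply: eF; lra.
by have := rdist_triangle x y z; lra.
Qed.

Lemma Baire_cover : (forall x, exists k, F k x) ->
  exists k x (r : R), 0 < r /\ forall y, rnorm (x - y) < r -> F k y.
Proof.
move=> Fcov; apply: contrapT => noball.
have nd k : nowhere_dense k.
  move=> x r r0; apply: contrapT => h; apply: noball; exists k, x, r; split => // y xy.
  by apply: contrapT => nFy; apply: h; exists y.
pose next (p : nat * (X * R)) (q : X * R) := [/\ 0 < q.2, q.2 <= p.1.+2%:R^-1 &
  forall z, rnorm (q.1 - z) < 2 * q.2 -> rnorm (p.2.1 - z) < p.2.2 /\ ~ F p.1 z].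
have next_ex p : exists q, 0 < p.2.2 -> next p q.
  case: p => k [x r] /=.
  have [r0|r0] := ltrP 0 r; first by have [q hq] := Baire_step x (nd k) r0; exists q.
  by exists (x, r).
have [f hf] := choice next_ex.
pose fix c n := if n is p.+1 then f (p, c p) else (0, 1).
pose x n := (c n).1; pose r n := (c n).2.
have r_gt0 n : 0 < r n by elim: n => [|n IH]; [exact: ltr01 | have [] := hf (n, c n) IH].
have step n : [/\ 0 < r n.+1, r n.+1 <= n.+2%:R^-1 &
    forall z, rnorm (x n.+1 - z) < 2 * r n.+1 -> rnorm (x n - z) < r n /\ ~ F n z].
  exact: (hf (n, c n) (r_gt0 n)).
have nest n m : (n <= m)%N -> rnorm (x n - x m) < r n.
  have nest' z : (n <= m)%N -> rnorm (x m - z) < r m -> rnorm (x n - z) < r n.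
    elim: m => [|m IH]; first by rewrite leqn0 => /eqP ->.
    rewrite leq_eqVlt => /predU1P [-> //|/IH nm zm]; apply: nm.
    by have [r1 _ h] := step m; apply: (h z _).1; lra.
  by move=> nm; apply: nest' => //; rewrite subrr rnorm0.
have cx : cvg (x @ \oo).
  apply: cauchy_cvg; apply: cauchy_exP => e e0; have er : e \is Num.real by exact: gtr0_real.
  have [N rN] : exists N, r N.+1 < complex.Re e.
    pose N := Num.truncn (complex.Re e)^-1; exists N; have [_ rN _] := step N.
    have e0' : 0 < complex.Re e by rewrite -ltcR RRe_real.
    apply: (le_lt_trans rN); rewrite -ltf_pV2 ?posrE ?invr_gt0 ?ltr0n // invrK.
    by apply: (lt_le_trans (truncnS_gt _)); rewrite ler_nat.
  exists (x N.+1), N.+1 => // m /= Nm.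
  by rewrite -(RRe_real er) ball_rnorm; have := nest _ _ Nm; lra.
have xl : x @ \oo --> lim (x @ \oo) := cx.
have [k Fkl] := Fcov (lim (x @ \oo)).
case: (step k) => r1 _ h.
suff xkl : rnorm (x k.+1 - lim (x @ \oo)) < 2 * r k.+1 by exact: (h _ xkl).2 Fkl.
have [|N _ hN] := (cvgrPdist_lt _ _).1 xl (r k.+1)%:C; first by rewrite ltcR.
have := hN _ (leq_maxl N k.+1); rewrite /= rnormE ltcR rdistC.
have := nest _ _ (leq_maxr N k.+1).
by have := rdist_triangle (x k.+1) (x (maxn N k.+1)) (lim (x @ \oo)); lra.
Qed.

End Baire.

Lemma compact_rnorm_bounded (R : realType) (V : normedModType R[i]) (A : set V) :
  compact A -> exists K : R, forall p, A p -> rnorm p <= K.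
Proof.
rewrite compact_cover => Aco.
have /Aco [] : A `<=` \bigcup_(n : nat) [set p | rnorm p < n%:R].
- by move=> p _; exists (Num.truncn (rnorm p)).+1; rewrite //= truncnS_gt.
- move=> n _; rewrite (_ : [set p | _] = [set p | rnorm (0 - p) < n%:R]).
    exact: open_rball.
  by apply/seteqP; split => p /=; rewrite sub0r rnormN.
move=> D _ DA; exists (\big[Order.max/0]_(n <- finmap.enum_fset D) (n%:R : R)).
move=> p /DA [n Dn /= pn]; apply/ltW/(lt_le_trans pn).
exact: (@le_bigmax_seq _ _ _ _ _ _ xpredT (fun n : nat => (n%:R : R))).
Qed.

Lemma closed_rnorm_le (R : realType) (V W : normedModType R[i]) (f : V -> W) (c : R) :
  continuous f -> closed [set x | rnorm (f x) <= c].
Proof.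
move=> fc; rewrite (_ : [set x | _] = ~` [set x | c < rnorm (f x)]).
  rewrite closedC; apply/open_rnormP => x /= cfx.
  have [|d d0 fd] := continuous_rnorm (fc x) (_ : 0 < rnorm (f x) - c); first lra.
  by exists d => // y /fd; have := rdist_triangle (f x) (f y) 0; rewrite !subr0; lra.
apply/seteqP; split => x /= h; first by rewrite ltNge h.
by rewrite leNgt; apply/negP.
Qed.

(* From a ball [x0 + B(r)] on which [|f| <= c], rescale [x] into [B(r/2)]. *)
Lemma linear_ball_bound (R : realType) (V W : normedModType R[i]) (f : V -> W)
    x0 (r c : R) :
  is_linear f -> 0 < r -> (forall y, rnorm (x0 - y) < r -> rnorm (f y) <= c) ->
  forall x, rnorm (f x) <= 4 * c / r * rnorm x.
Proof.
move=> flin r0 fc x; have c0 : 0 <= c.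
  by apply: le_trans (rnorm_ge0 (f x0)) (fc _ _); rewrite subrr rnorm0.
have [x0'|xpos] := lerP (rnorm x) 0.
  have -> : x = 0 by apply: rnorm0_eq0; have := rnorm_ge0 x; lra.
  by rewrite lin0 // !rnorm0 mulr0.
pose a := r / (2 * rnorm x); have a0 : 0 < a by rewrite divr_gt0 // mulr_gt0.
have ax : a * rnorm x = r / 2 by rewrite /a mulrAC -mulf_div divff ?gt_eqF // mulr1 mulrC.
have fy : rnorm (f (a%:C *: x)) <= 2 * c.
  have y_in : rnorm (x0 - (a%:C *: x + x0)) < r.
    by rewrite opprD addrCA subrr addr0 rnormN rnormZ (ger0_norm (ltW a0)) ax; lra.
  have x0_in : rnorm (x0 - x0) < r by rewrite subrr rnorm0.
  rewrite -[a%:C *: x](addrK x0) linB //.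
  have := rnormD (f (a%:C *: x + x0)) (- f x0); rewrite rnormN.
  by have := fc _ y_in; have := fc _ x0_in; lra.
move: fy; rewrite linZ // rnormZ (ger0_norm (ltW a0)) => fy.
have -> : 4 * c / r * rnorm x = 2 * c / a by rewrite /a; field; rewrite !gt_eqF.
by rewrite ler_pdivlMr // mulrC.
Qed.

Section C0Bounds.
Variables (R : realType) (X : completeNormedModType R[i]) (T : R -> X -> X).
Hypothesis hT : C0_semigroup T.

Lemma C0_orbit_bounded L x : exists K : R, forall t, 0 <= t -> t <= L -> rnorm (T t x) <= K.
Proof.
have Tx0 : {within [set t | 0 <= t], continuous (fun t => T t x)} by case: hT.
have Tx : {within `[0, L], continuous (fun t => T t x)}.
  by apply: continuous_subspaceW Tx0 => t /=; rewrite in_itv /= => /andP [].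
have [K hK] := compact_rnorm_bounded (continuous_compact Tx (@segment_compact R 0 L)).
by exists K => t t0 tL; apply: hK; exists t => //=; rewrite in_itv /= t0 tL.
Qed.

Lemma C0_uniform_bound L : exists2 M : R, 0 <= M &
  forall t x, 0 <= t -> t <= L -> rnorm (T t x) <= M * rnorm x.
Proof.
pose F (k : nat) := \bigcap_(t in `[0, L]) [set x | rnorm (T t x) <= k%:R].
have Fc k : closed (F k).
  apply: closed_bigI => t; rewrite /= in_itv /= => /andP [t0 _].
  exact/closed_rnorm_le/C0_continuous.
have Fcov x : exists k, F k x.
  have [K hK] := C0_orbit_bounded L x; exists (Num.truncn K).+1 => t.
  rewrite /= in_itv /= => /andP [t0 tL].
  by apply: le_trans (hK t t0 tL) _; apply/ltW/truncnS_gt.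
have [k [x0 [r [r0 rF]]]] := Baire_cover Fc Fcov.
exists (4 * k%:R / r); first by rewrite divr_ge0 ?mulr_ge0 // ltW.
move=> t x t0 tL; apply: linear_ball_bound (C0_linear hT t0) r0 _ x => y /rF.
by apply; rewrite /= in_itv /= t0 tL.
Qed.

Lemma C0_small L (e : R) : 0 < e -> exists2 d : R, 0 < d &
  forall t x, 0 <= t -> t <= L -> rnorm x < d -> rnorm (T t x) < e.
Proof.
move=> e0; have [M M0 hM] := C0_uniform_bound L.
exists (e / (M + 1)) => [|t x t0 tL xd]; first by rewrite divr_gt0 //; lra.
apply: le_lt_trans (hM t x t0 tL) _.
rewrite ltr_pdivlMr in xd; last lra.
by have := rnorm_ge0 x; nra.
Qed.

End C0Bounds.

Section HcShift.
Variables (R : realType) (X : completeNormedModType R[i]) (T : R -> X -> X).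
Hypotheses (hT : C0_semigroup T) (hc : hc_criterion T).

(* [T t w] near [v] with [w] small forces [t > L], and then [T t w = T L (T (t - L) w)]. *)
Lemma hc_range_dense L (O : set X) : 0 <= L -> open O -> O !=set0 -> exists x, O (T L x).
Proof.
move=> L0 oO [v Ov]; have [v0|vpos] := lerP (rnorm v) 0.
  by exists 0; rewrite C0_0 // -(rnorm0_eq0 (_ : rnorm v = 0)) //; have := rnorm_ge0 v; lra.
have [r r0 rO] := (open_rnormP O).1 oO v Ov.
pose rho := Num.min r (rnorm v / 2).
have [rho0 [rhor rhov]] : 0 < rho /\ rho <= r /\ rho <= rnorm v / 2.
  by rewrite lt_min r0 !ge_min !lexx orbT /=; split => //; lra.
have [|d d0 dsmall] := C0_small hT L (_ : 0 < rnorm v / 2); first lra.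
have ctr (z : X) e : 0 < e -> [set y | rnorm (z - y) < e] z by rewrite /= subrr rnorm0.
have [t [t0 [_ [_ [[w /= w0 <-] vTw]]]]] :=
  hc openT (open_rball v rho) (open_rball 0 d)
    (ex_intro _ 0 I) (ex_intro _ v (ctr v _ rho0)) (ctr 0 _ d0).
rewrite /= sub0r rnormN in w0; rewrite /= in vTw.
have [tL|Lt] := lerP t L.
  have := dsmall t w (ltW t0) tL w0.
  by have := rdist_triangle v (T t w) 0; rewrite !subr0; lra.
exists (T (t - L) w); rewrite -C0D ?subr_ge0 ?(ltW Lt) // addrC subrK.
by apply: rO; lra.
Qed.

(* [W'] is a ball on which every [T tau], [0 <= tau <= L], maps into [W], and
   [D' = T L @^-1` D] is reached from [T (L - tau) w] at time [t' + tau]. *)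
Lemma hc_at_shift (B D W : set X) L : hc_triple B D W -> 0 <= L ->
  exists D' W', hc_triple B D' W' /\ forall t', 0 <= t' -> hc_at T B D' W' t' ->
    forall tau, 0 <= tau <= L -> hc_at T B D W (t' + tau).
Proof.
move=> [oB B0 oD D0 [oW W0]] L0.
have [e e0 eW] := (open_rnormP W).1 oW 0 W0.
have [d d0 dsmall] := C0_small hT L e0.
exists (T L @^-1` D), [set y | rnorm (0 - y) < d]; split.
  split => //.
  - by apply: open_comp => // x _; apply: C0_continuous.
  - exact: hc_range_dense.
  - by split; [exact: open_rball | rewrite /= subrr rnorm0].
move=> t' t'0 [[_ [[b Bb <-] Tb]] [_ [[w w0 <-] Dw]]] tau /andP [tau0 tauL].
rewrite /= sub0r rnormN in Tb; rewrite /= sub0r rnormN in w0.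
have smallW x : rnorm x < d -> forall s, 0 <= s -> s <= L -> W (T s x).
  by move=> xd s s0 sL; apply: eW; rewrite sub0r rnormN; apply: dsmall.
split.
- by exists (T (t' + tau) b); split; [exists b | rewrite addrC C0D //; apply: smallW].
- exists (T (t' + tau) (T (L - tau) w)); split.
    by exists (T (L - tau) w) => //; apply: smallW; lra.
  suff -> : T (t' + tau) (T (L - tau) w) = T L (T t' w) by [].
  by rewrite -!(C0D hT); try congr T; lra.
Qed.

End HcShift.

Section TensorWindow.
Variables (R : realType) (X Y Z : completeNormedModType R[i]).
Variables (T : R -> X -> X) (S : R -> Y -> Y) (tens : X -> Y -> Z) (TS : R -> Z -> Z).
Hypotheses (hT : C0_semigroup T) (hS : C0_semigroup S).
Hypotheses (rhcT : recurrent_hc_criterion T) (hcS : hc_criterion S).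
Hypothesis htens : uniform_crossnorm_completion tens.
Hypothesis hTS : forall t, 0 <= t -> bounded_op (TS t) /\
  forall x y, TS t (tens x y) = tens (T t x) (S t y).

Lemma hc_at_tensor_window (U V W : set Z) : hc_triple U V W ->
  exists (B D W' : set Y) (L : R), [/\ hc_triple B D W', 0 <= L &
    forall t, 0 <= t -> hc_at S B D W' t -> exists2 s, t <= s <= t + L & hc_at TS U V W s].
Proof.
move=> UVW; have hcT := recurrent_hc_criterion_hc rhcT.
have [A [C [WX [B [D [WY [ACW BDW reduce]]]]]]] :=
  hc_triple_tensor hT hS htens hTS (hc_transitive hT hcT) (hc_transitive hS hcS) UVW.
have [L L0 hL] := (recurrent_hc_criterionP T).1 rhcT _ _ _ ACW.
have [D' [W' [BDW' shift]]] := hc_at_shift hS hcS BDW L0.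
exists B, D', W', L; split => // t t0 hSt; have [s /andP [ts sL] hTs] := hL t t0.
exists s; first by rewrite ts sL.
apply: reduce hTs _; first lra.
by rewrite -(subrKC t s); apply: shift => //; rewrite subr_ge0 ts /=; lra.
Qed.

End TensorWindow.

Unset Implicit Arguments.

Theorem theorem2p1 (R : realType) (X Y Z : completeNormedModType R[i])
    (T : R -> X -> X) (S : R -> Y -> Y) (tens : X -> Y -> Z) (TS : R -> Z -> Z) :
  C0_semigroup T -> C0_semigroup S ->
  recurrent_hc_criterion T ->
  uniform_crossnorm_completion tens ->
  (forall t, 0 <= t -> bounded_op (TS t) /\
     forall x y, TS t (tens x y) = tens (T t x) (S t y)) ->
  (hc_criterion S -> hc_criterion TS) /\
  (recurrent_hc_criterion S -> recurrent_hc_criterion TS).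
Proof.
move=> hT hS rhcT htens hTS; split.
- move=> hcS; apply/hc_criterionP => U V W UVW.
  have [B [D [W' [L [BDW _ window]]]]] := hc_at_tensor_window hT hS rhcT hcS htens hTS UVW.
  have [t t0 hSt] := (hc_criterionP S).1 hcS _ _ _ BDW.
  have [s /andP [ts _] hs] := window t (ltW t0) hSt.
  by exists s => //; apply: lt_le_trans ts.
- move=> rhcS; apply/recurrent_hc_criterionP => U V W UVW.
  have hcS := recurrent_hc_criterion_hc rhcS.
  have [B [D [W' [L [BDW L0 window]]]]] := hc_at_tensor_window hT hS rhcT hcS htens hTS UVW.
  have [L' L'0 hL'] := (recurrent_hc_criterionP S).1 rhcS _ _ _ BDW.
  exists (L' + L) => [|t t0]; first lra.
  have [t' /andP [tt' t'L'] hSt'] := hL' t t0.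
  have [s /andP [t's sL] hs] := window t' (le_trans t0 tt') hSt'.
  by exists s => //; apply/andP; split; lra.
Qed.
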